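(* Let $M$ be an entrywise nonnegative $m\times n$ real matrix and let $M=AW$ be a stable nonnegative matrix factorization with $A\in\mathbb{R}_{\ge0}^{m\times r}$, $W\in\mathbb{R}_{\ge0}^{r\times n}$. Let $s=\mathrm{rank}(A)$, let $U\subseteq[m]$ be a set of $s$ linearly independent rows of $A$, and let $B_1,\dots,B_p$ be the ensemble of $A$ at $U$. Then for every $k\in[p]$ and every column index $i$, $AB_kM_i^U=M_i$.
   Context: Notation: $M_i$ is the $i$-th column, $M^j$ the $j$-th row; $A_S$ denotes columns in $S$, $A^U$ rows in $U$, $M_i^U$ the entries of $M_i$ in rows $U$. $\mathrm{aff}(A)=\{\sum_i\alpha_iA_i:\alpha_i\ge0\}$. A subset $S\subseteq[r]$ of columns of $A$ is admissible for $v\in\mathbb{R}^m$ if $v\in\mathrm{aff}(A_S)$; a subset $T\subseteq[r]$ of rows of $W$ is admissible for a row vector $u$ if $u$ is a nonnegative combination of the rows of $W^T$. Lexicographic ordering on subsets of $[r]$: if $|S|<|T|$ then $S$ precedes $T$; equal-size subsets compared by standard lexicographic order. $M=AW$ is stable if, with $S_i$ the lexicographically first subset of columns of $A$ admissible for $M_i$ and $T_j$ the lexicographically first subset of rows of $W$ admissible for $M^j$, each $W_i$ is supported in $S_i$ and each row $A^j$ is supported in $T_j$. Ensemble: let $S_1,\dots,S_p$ be all sets of $s$ linearly independent columns of $A$, in lexicographic order; $B_k$ is the $r\times s$ matrix that is zero on rows outside $S_k$ and whose restriction to rows $S_k$ equals $(A^U_{S_k})^{-1}$. *)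

From HB Require Import structures.
From mathcomp Require Import all_boot all_order all_algebra.
Set Implicit Arguments. Unset Strict Implicit. Unset Printing Implicit Defensive.
Import Order.TTheory GRing.Theory Num.Theory.
Local Open Scope ring_scope.

Section NMF.
Variable R : realFieldType.

Fixpoint lexlt (s t : seq nat) : bool :=
  match s, t with
  | [::], [::] => false
  | [::], _ :: _ => true
  | _ :: _, [::] => false
  | x :: s', y :: t' => (x < y)%N || ((x == y) && lexlt s' t')
  end.

Definition subset_prec (r : nat) (S T : {set 'I_r}) : bool :=
  (#|S| < #|T|)%N ||
  ((#|S| == #|T|) &&
   lexlt (sort leq [seq val j | j <- enum S]) (sort leq [seq val j | j <- enum T])).

Definition lex_first (r : nat) (P : {set 'I_r} -> Prop) (S : {set 'I_r}) : Prop :=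
  P S /\ forall T, P T -> T != S -> subset_prec S T.

Definition col_admissible (m r : nat) (A : 'M[R]_(m, r)) (S : {set 'I_r})
  (v : 'cV[R]_m) : Prop :=
  exists alpha : 'I_r -> R,
    (forall j, 0 <= alpha j) /\ v = \sum_(j in S) alpha j *: col j A.

Definition row_admissible (r n : nat) (W : 'M[R]_(r, n)) (T : {set 'I_r})
  (u : 'rV[R]_n) : Prop :=
  exists beta : 'I_r -> R,
    (forall l, 0 <= beta l) /\ u = \sum_(l in T) beta l *: row l W.

Definition stable (m n r : nat) (M : 'M[R]_(m, n)) (A : 'M[R]_(m, r))
  (W : 'M[R]_(r, n)) : Prop :=
  (forall (i : 'I_n) (S : {set 'I_r}),
      lex_first (fun S => col_admissible A S (col i M)) S ->
      forall j, j \notin S -> W j i = 0) /\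
  (forall (j : 'I_m) (T : {set 'I_r}),
      lex_first (fun T => row_admissible W T (row j M)) T ->
      forall l, l \notin T -> A j l = 0).

Definition nonneg_mx (p q : nat) (X : 'M[R]_(p, q)) : Prop :=
  forall i j, 0 <= X i j.

Definition strictly_increasing (s p : nat) (f : 'I_s -> 'I_p) : Prop :=
  forall a b : 'I_s, (a < b)%N -> (f a < f b)%N.

(* Ensemble member: for the column set S_k given by the increasing map g and row set
   U given by the increasing map f, B_k is the r x s matrix that vanishes on rows
   outside S_k and whose restriction to rows S_k equals (A^U_{S_k})^{-1}. *)
Definition ensemble_mx (m r s : nat) (A : 'M[R]_(m, r)) (f : 'I_s -> 'I_m)
  (g : 'I_s -> 'I_r) : 'M[R]_(r, s) :=
  \matrix_(j < r, b < s)
    match [pick a | g a == j] with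
    | Some a => invmx (rowsub f (colsub g A)) a b
    | None => 0
    end.

End NMF.

From HB Require Import structures.
From mathcomp Require Import all_boot all_order all_algebra.
Import Order.TTheory GRing.Theory Num.Theory.
Local Open Scope ring_scope.

(* Since rank A_{S_k} = s = rank A, every column M_i of M = A W lies in the
   column space of A_{S_k}, say M_i = A_{S_k} d.  Restricting to the rows U gives
   M_i^U = A^U_{S_k} d, and A^U_{S_k} is invertible because the rows U span the
   row space of A.  As A B_k = A_{S_k} (A^U_{S_k})^{-1}, we get
   A B_k M_i^U = A_{S_k} d = M_i. *)

Lemma strictly_increasing_inj (s p : nat) (g : 'I_s -> 'I_p) :
  strictly_increasing g -> injective g.
Proof.
move=> hg a b eab; apply/val_inj.
by case: (ltngtP a b) => // /hg; rewrite eab ltnn.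
Qed.

Section Ensemble.
Context {R : realFieldType} {m r s : nat} (A : 'M[R]_(m, r)).
Variables (f : 'I_s -> 'I_m) (g : 'I_s -> 'I_r).
Hypothesis g_inj : injective g.

Lemma ensemble_mxE :
  ensemble_mx A f g = colsub g 1%:M *m invmx (rowsub f (colsub g A)).
Proof.
apply/matrixP => j b; rewrite !mxE.
under eq_bigr do rewrite !mxE mulr_natl eq_sym.
case: pickP => [a /eqP ga | none]; last first.
  by rewrite big1 // => a _; rewrite none.
rewrite (bigD1 a) //= ga eqxx big1 ?addr0 // => a' ne_a'a.
by rewrite -ga inj_eq // (negPf ne_a'a).
Qed.

Lemma mulmx_ensemble_mx :
  A *m ensemble_mx A f g = colsub g A *m invmx (rowsub f (colsub g A)).
Proof. by rewrite ensemble_mxE mulmxA mulmx_colsub mulmx1. Qed.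

End Ensemble.

Section ColumnSubmatrices.
Context {F : fieldType} {m r s : nat} (A : 'M[F]_(m, r)).

Lemma colspace_colsub_full (g : 'I_s -> 'I_r) :
  \rank (colsub g A) = \rank A -> (A^T <= (colsub g A)^T)%MS.
Proof.
move=> rk_gA.
have sub_gA : ((colsub g A)^T <= A^T)%MS.
  have -> : colsub g A = A *m colsub g 1%:M by rewrite mulmx_colsub mulmx1.
  by rewrite trmx_mul submxMl.
by rewrite -(mxrank_leqif_sup sub_gA) !mxrank_tr rk_gA.
Qed.

Lemma colspace_col_mulmx {n : nat} (W : 'M[F]_(r, n)) (i : 'I_n) :
  ((col i (A *m W))^T <= A^T)%MS.
Proof. by rewrite colE -mulmxA -colE trmx_mul submxMl. Qed.

(* The rows f span the row space of A, so A = Y (rowsub f A) and restricting to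
   the columns g exhibits colsub g A as a multiple of the square block. *)
Lemma rowsub_colsub_unitmx (f : 'I_s -> 'I_m) (g : 'I_s -> 'I_r) :
  \rank (rowsub f A) = \rank A -> \rank (colsub g A) = s ->
  rowsub f (colsub g A) \in unitmx.
Proof.
move=> rk_fA rk_gA.
have /submxP [Y defA] : (A <= rowsub f A)%MS.
  by rewrite -(mxrank_leqif_sup (rowsub_sub f A)) rk_fA.
have def_gA : colsub g A = Y *m rowsub f (colsub g A).
  by rewrite {1}defA -mulmx_colsub -mxsubcr mxsubrc.
rewrite -row_free_unit /row_free eqn_leq rank_leq_row /=.
by rewrite -{1}rk_gA {1}def_gA mxrankM_maxr.
Qed.

End ColumnSubmatrices.

Lemma rowsub_interpolation (F : fieldType) (m s : nat) (C : 'M[F]_(m, s))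
  (f : 'I_s -> 'I_m) (v : 'cV[F]_m) :
  rowsub f C \in unitmx -> (v^T <= C^T)%MS ->
  C *m invmx (rowsub f C) *m rowsub f v = v.
Proof.
move=> unit_fC /submxP [D defv].
have -> : v = C *m D^T by rewrite -[v]trmxK defv trmx_mul trmxK.
by rewrite -mul_rowsub_mx mulmxA -(mulmxA C) mulVmx // mulmx1.
Qed.

Theorem mainTheorem7 (R : realFieldType) (m n r s : nat)
  (M : 'M[R]_(m, n)) (A : 'M[R]_(m, r)) (W : 'M[R]_(r, n))
  (hM : nonneg_mx M) (hA : nonneg_mx A) (hW : nonneg_mx W)
  (hfac : M = A *m W) (hstab : stable M A W)
  (hs : \rank A = s)
  (f : 'I_s -> 'I_m) (hf : strictly_increasing f) (hU : row_free (rowsub f A)) :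
  forall g : 'I_s -> 'I_r, strictly_increasing g -> \rank (colsub g A) = s ->
  forall i : 'I_n,
    A *m ensemble_mx A f g *m rowsub f (col i M) = col i M.
Proof.
move=> g hg rk_gA i.
have rk_fA : \rank (rowsub f A) = \rank A by rewrite hs; apply/eqP.
rewrite mulmx_ensemble_mx; last exact: strictly_increasing_inj.
apply: rowsub_interpolation; first exact: rowsub_colsub_unitmx.
rewrite hfac; apply: submx_trans (colspace_col_mulmx A W i) _.
by apply: colspace_colsub_full; rewrite rk_gA.
Qed.
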